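(* Let $f\colon(X,p)\to(Y,q)$ be a basepointed cubical map, where $Y$ is a compact non-positively curved cube complex and $X$ is connected. If $Z$ and $Z'$ are completions of $f$, then $Z=Z'$.
   Context: Cube complexes are built from unit cubes; non-positively curved means vertex links are flag; a cubical map sends $n$-cubes isometrically onto $n$-cubes; it is a local isometry if the induced maps on vertex links are injective with full images. Moves on a cubical map $g\colon(X,p)\to(Y,q)$: folding (identify two distinct edges with a common initial vertex and the same image), cube identification (identify two distinct $n$-cubes with equal $1$-skeleta), cube attachment (if edges $e_1,\dots,e_{n+1}$ at a vertex $v$ are not the edges at $v$ of a cube of $X$ but their images are the edges at $g(v)$ of an $(n+1)$-cube $c$ of $Y$, attach an $(n+1)$-cube along $v,e_1,\dots,e_{n+1}$ mapping to $c$). Each move yields a natural cubical map compatible with maps to $Y$. A completion of $f$ is the direct limit $(\hat X,\hat p)$ of a sequence $(X,p)=(X_1,p_1)\to(X_2,p_2)\to\cdots$ of such moves whose induced cubical map $\hat X\to Y$ is a local isometry. *)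

(* Combinatorial model of cube complexes:
   a cube complex is a presheaf on the category of cubes [0,1]^n and
   isometric face embeddings (including symmetries of cubes), on which the
   symmetry groups act freely.  An element of [cell X n] is an n-cube of X
   together with a parametrisation by [0,1]^n ("oriented n-cube"). *)
From Stdlib Require Import Relations List.
From mathcomp Require Import all_boot.

Set Implicit Arguments.
Unset Strict Implicit.
Unset Printing Implicit Defensive.

(* vertices of the standard n-cube [0,1]^n *)
Definition V (n : nat) := {ffun 'I_n -> bool}.

(* f is (the vertex map of) an isometric embedding of [0,1]^m onto a face
   of [0,1]^n: coordinates are permuted injectively, possibly reflected,
   and the remaining coordinates are fixed to constants. *)
Definition is_face (m n : nat) (f : {ffun V m -> V n}) : Prop :=
  exists (iota : 'I_m -> 'I_n) (s : 'I_m -> bool) (b : 'I_n -> bool),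
    injective iota /\
    forall v : V m,
      (forall i, f v (iota i) = addb (v i) (s i)) /\
      (forall j, (forall i, iota i <> j) -> f v j = b j).

Definition fid (n : nat) : {ffun V n -> V n} := [ffun v => v].
Definition fcomp k m n (f : {ffun V m -> V n}) (g : {ffun V k -> V m})
  : {ffun V k -> V n} := [ffun v => f (g v)].

Record CubeCx := {
  cell : nat -> Type;
  act : forall m n, {ffun V m -> V n} -> cell n -> cell m;
  act_id : forall n (x : cell n), act (fid n) x = x;
  act_comp : forall k m n (f : {ffun V m -> V n}) (g : {ffun V k -> V m})
      (x : cell n), is_face f -> is_face g ->
      act (fcomp f g) x = act g (act f x);
  (* the symmetries of the cube act freely: geometric cubes are genuine cubes *)
  act_free : forall n (s : {ffun V n -> V n}) (x : cell n),
      is_face s -> act s x = x -> s = fid n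
}.

Arguments act {c m n} f x.

Record cmap (X Y : CubeCx) := {
  fn : forall n, cell X n -> cell Y n;
  fn_nat : forall m n (f : {ffun V m -> V n}) (x : cell X n),
      is_face f -> fn (act f x) = act f (fn x)
}.
Arguments fn {X Y} c {n} x.

Program Definition cid (X : CubeCx) : cmap X X :=
  {| fn := fun n x => x |}.

Program Definition ccomp (X Y Z : CubeCx) (g : cmap Y Z) (f : cmap X Y)
  : cmap X Z := {| fn := fun n x => fn g (fn f x) |}.
Next Obligation. by rewrite !fn_nat. Qed.

Definition ceq (X Y : CubeCx) (u v : cmap X Y) : Prop :=
  forall n (x : cell X n), fn u x = fn v x.

Definition is_iso (X Y : CubeCx) (h : cmap X Y) : Prop :=
  exists k : cmap Y X, ceq (ccomp k h) (cid X) /\ ceq (ccomp h k) (cid Y).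

Definition vert0 (n : nat) : {ffun V 0 -> V n} := [ffun _ => [ffun _ => false]].
Definition vert1 : {ffun V 0 -> V 1} := [ffun _ => [ffun _ => true]].
Definition cedge (n : nat) (i : 'I_n) : {ffun V 1 -> V n} :=
  [ffun v : V 1 => [ffun j => (j == i) && v ord0]].

Definition src (X : CubeCx) (e : cell X 1) : cell X 0 := act (vert0 1) e.
Definition tgt (X : CubeCx) (e : cell X 1) : cell X 0 := act vert1 e.
Definition base (X : CubeCx) n (x : cell X n) : cell X 0 := act (vert0 n) x.

Definition compact (X : CubeCx) : Prop :=
  (exists N, forall n, N < n -> cell X n -> False) /\
  (forall n, exists l : list (cell X n), forall x, List.In x l).

Definition connected (X : CubeCx) : Prop :=
  forall u w : cell X 0,
    clos_refl_sym_trans _ (fun a b => exists e : cell X 1, src e = a /\ tgt e = b) u w.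

(* Non-positively curved: every vertex link is a flag simplicial complex.
   A k-simplex of lk(v) is a corner at v of a (k+1)-cube, i.e. an oriented
   (k+1)-cube based at v up to permutation of coordinates; its vertices are
   the edges of the cube at that corner. *)
Definition npc (X : CubeCx) : Prop :=
  (* simplices are determined by their vertices *)
  (forall n (x y : cell X n), base x = base y ->
      (forall i, act (cedge i) x = act (cedge i) y) -> x = y) /\
  (* the vertices of a simplex are distinct *)
  (forall n (x : cell X n) (i j : 'I_n), i != j ->
      act (cedge i) x <> act (cedge j) x) /\
  (* flag condition *)
  (forall n (v : cell X 0) (e : 'I_n -> cell X 1),
      (forall i, src (e i) = v) ->
      (forall i j, i != j -> exists s : cell X 2,
          act (cedge ord0) s = e i /\ act (cedge (@Ordinal 2 1 isT)) s = e j) ->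
      exists x : cell X n, base x = v /\ forall i, act (cedge i) x = e i).

(* local isometry: the induced maps on vertex links are injective with
   full images *)
Definition local_isometry (X Y : CubeCx) (h : cmap X Y) : Prop :=
  (forall n (x y : cell X n), base x = base y -> fn h x = fn h y -> x = y) /\
  (forall n (v : cell X 0) (c : cell Y n), base c = fn h v ->
      (forall i : 'I_n, exists e : cell X 1, src e = v /\ fn h e = act (cedge i) c) ->
      exists x : cell X n, base x = v /\ fn h x = c).

(* folding: B is obtained from A by identifying two distinct edges e1, e2
   with a common initial vertex and the same image in Y *)
Definition is_fold (A B Y : CubeCx) (gA : cmap A Y) (phi : cmap A B) : Prop :=
  exists e1 e2 : cell A 1,
    e1 <> e2 /\ src e1 = src e2 /\ fn gA e1 = fn gA e2 /\
    fn phi e1 = fn phi e2 /\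
    forall (W : CubeCx) (psi : cmap A W), fn psi e1 = fn psi e2 ->
      exists u : cmap B W, ceq (ccomp u phi) psi /\
        forall u' : cmap B W, ceq (ccomp u' phi) psi -> ceq u' u.

(* cube identification: B is obtained from A by identifying two distinct
   n-cubes with equal 1-skeleta *)
Definition is_cube_ident (A B : CubeCx) (phi : cmap A B) : Prop :=
  exists n (c1 c2 : cell A n),
    c1 <> c2 /\
    (forall k (eps : {ffun V k -> V n}), k <= 1 -> is_face eps ->
        act eps c1 = act eps c2) /\
    fn phi c1 = fn phi c2 /\
    forall (W : CubeCx) (psi : cmap A W), fn psi c1 = fn psi c2 ->
      exists u : cmap B W, ceq (ccomp u phi) psi /\
        forall u' : cmap B W, ceq (ccomp u' phi) psi -> ceq u' u.

(* cube attachment: B is obtained from A by attaching an (n+1)-cube d along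
   the vertex v and the edges e_0..e_n, mapping d to the cube c of Y *)
Definition is_attach (A B Y : CubeCx) (gA : cmap A Y) (gB : cmap B Y)
    (phi : cmap A B) : Prop :=
  exists n (v : cell A 0) (e : 'I_n.+1 -> cell A 1) (c : cell Y n.+1)
         (d : cell B n.+1),
    (forall i, src (e i) = v) /\
    ~ (exists x : cell A n.+1, forall i, act (cedge i) x = e i) /\
    (forall i, fn gA (e i) = act (cedge i) c) /\
    (forall i, act (cedge i) d = fn phi (e i)) /\
    fn gB d = c /\
    forall (W : CubeCx) (psi : cmap A W) (w : cell W n.+1),
      (forall i, act (cedge i) w = fn psi (e i)) ->
      exists u : cmap B W, (ceq (ccomp u phi) psi /\ fn u d = w) /\
        forall u' : cmap B W, ceq (ccomp u' phi) psi -> fn u' d = w -> ceq u' u.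

(* Isomorphisms (over Y) are also
   allowed as steps: this lets finite sequences of moves be padded to
   infinite ones and does not change direct limits up to isomorphism. *)
Definition is_step (A B Y : CubeCx) (gA : cmap A Y) (gB : cmap B Y)
    (phi : cmap A B) : Prop :=
  ceq gA (ccomp gB phi) /\
  (is_iso phi \/ is_fold gA phi \/ is_cube_ident phi \/ is_attach gA gB phi).

(* (Z, iota, g) is a completion of f : X -> Y: Z is the direct limit of a
   sequence X -> X_0 -> X_1 -> ... of moves, iota : X -> Z is the induced
   map (so the basepoint of Z is the image of that of X), g : Z -> Y the
   induced cubical map, and g is a local isometry. *)
Definition is_completion (X Y : CubeCx) (f : cmap X Y)
    (Z : CubeCx) (iota : cmap X Z) (g : cmap Z Y) : Prop :=
  exists (Xs : nat -> CubeCx) (phi : forall i, cmap (Xs i) (Xs i.+1))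
         (gs : forall i, cmap (Xs i) Y) (psi0 : cmap X (Xs 0))
         (j : forall i, cmap (Xs i) Z),
    is_step f (gs 0) psi0 /\
    (forall i, is_step (gs i) (gs i.+1) (phi i)) /\
    (forall i, ceq (ccomp (j i.+1) (phi i)) (j i)) /\
    (forall (W : CubeCx) (k : forall i, cmap (Xs i) W),
       (forall i, ceq (ccomp (k i.+1) (phi i)) (k i)) ->
       exists u : cmap Z W, (forall i, ceq (ccomp u (j i)) (k i)) /\
         forall u' : cmap Z W, (forall i, ceq (ccomp u' (j i)) (k i)) ->
           ceq u' u) /\
    ceq iota (ccomp (j 0) psi0) /\
    (forall i, ceq (ccomp g (j i)) (gs i)) /\
    local_isometry g.

(* A completion g : Z -> Y is a local isometry, and each move A -> B over Y
   is universal with respect to local isometries W -> Y: a map A -> W over Y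
   extends uniquely to a map B -> W over Y.  For folds and cube
   identifications the two identified cells already have equal images in W,
   because W -> Y is injective on links (and, for cubes, because cubes of the
   npc complex Y are determined by their corners); an attached cube lifts to
   W because W -> Y is surjective on links.  Passing to the direct limit, Z
   is initial among local isometries to Y under X, so two completions are
   isomorphic over Y and under X. *)
From mathcomp Require Import all_boot.
From Stdlib Require Import ClassicalEpsilon.

Set Implicit Arguments.
Unset Strict Implicit.
Unset Printing Implicit Defensive.

Lemma is_face_vert0 n : is_face (vert0 n).
Proof.
exists (fun i : 'I_0 => match i with Ordinal _ h => False_rect _ (notF h) end).
exists (fun _ => false), (fun _ => false).
split; first by case=> ? h.
by move=> v; split; [case=> ? h | move=> j _; rewrite !ffunE].
Qed.

Lemma is_face_cedge n (i : 'I_n) : is_face (cedge i).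
Proof.
exists (fun _ => i), (fun _ => false), (fun _ => false).
split; first by move=> a b _; apply/val_inj; case: a b => [[|?] ?] [[|?] ?].
move=> v; split.
- move=> k; rewrite !ffunE eqxx /= addbF.
  by have -> : k = ord0 by apply/val_inj; case: k => [[|]].
- by move=> j hj; rewrite !ffunE; case: eqP => // E; case: (hj ord0); rewrite E.
Qed.

Lemma fcomp_cedge_vert0 n (i : 'I_n) : fcomp (cedge i) (vert0 1) = vert0 n.
Proof. by apply/ffunP => v; rewrite !ffunE; apply/ffunP => j; rewrite !ffunE andbF. Qed.

Lemma src_cedge (X : CubeCx) n (x : cell X n) (i : 'I_n) :
  src (act (cedge i) x) = base x.
Proof.
rewrite /src /base -act_comp ?fcomp_cedge_vert0 //.
  exact: is_face_cedge.
exact: is_face_vert0.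
Qed.

Lemma fn_base (X Y : CubeCx) (h : cmap X Y) n (x : cell X n) :
  fn h (base x) = base (fn h x).
Proof. exact/fn_nat/is_face_vert0. Qed.

Lemma fn_src (X Y : CubeCx) (h : cmap X Y) (e : cell X 1) :
  fn h (src e) = src (fn h e).
Proof. exact: fn_base. Qed.

Lemma fn_cedge (X Y : CubeCx) (h : cmap X Y) n (i : 'I_n) (x : cell X n) :
  fn h (act (cedge i) x) = act (cedge i) (fn h x).
Proof. exact/fn_nat/is_face_cedge. Qed.

Lemma ceq_sym (X Y : CubeCx) (u v : cmap X Y) : ceq u v -> ceq v u.
Proof. by move=> h n x; rewrite h. Qed.

Lemma ceq_trans (X Y : CubeCx) (u v w : cmap X Y) : ceq u v -> ceq v w -> ceq u w.
Proof. by move=> h1 h2 n x; rewrite h1 h2. Qed.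

Lemma ceq_ccompl (X Y Z : CubeCx) (w : cmap X Y) (u v : cmap Y Z) :
  ceq u v -> ceq (ccomp u w) (ccomp v w).
Proof. by move=> h n x /=; rewrite h. Qed.

Lemma ceq_ccompr (X Y Z : CubeCx) (w : cmap Y Z) (u v : cmap X Y) :
  ceq u v -> ceq (ccomp w u) (ccomp w v).
Proof. by move=> h n x /=; rewrite h. Qed.

Section OverLocalIsometry.

Variables (Y W A : CubeCx) (gW : cmap W Y) (gA : cmap A Y) (a : cmap A W).
Hypotheses (hli : local_isometry gW) (ha : ceq (ccomp gW a) gA).

Lemma over_local_isometry_inj n (x1 x2 : cell A n) :
  base x1 = base x2 -> fn gA x1 = fn gA x2 -> fn a x1 = fn a x2.
Proof.
move=> hb hg; case: hli => inj _; apply: inj; first by rewrite -!fn_base hb.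
by move: (ha x1) (ha x2) => /= -> ->.
Qed.

Lemma over_local_isometry_lift n (v : cell A 0) (e : 'I_n -> cell A 1)
    (c : cell Y n) :
  (forall i, src (e i) = v) -> (forall i, fn gA (e i) = act (cedge i) c) ->
  base c = fn gA v ->
  exists x : cell W n, [/\ base x = fn a v, fn gW x = c &
                          forall i, act (cedge i) x = fn a (e i)].
Proof.
move=> hsrc hge hbc; case: hli => inj lift.
have [x [hbx hx]] : exists x : cell W n, base x = fn a v /\ fn gW x = c.
  apply: lift; first by rewrite hbc -(ha v).
  move=> i; exists (fn a (e i)); split; first by rewrite -fn_src hsrc.
  by move: (ha (e i)) => /= ->; apply: hge.
exists x; split=> // i; apply: inj.
  change (src (act (cedge i) x) = src (fn a (e i))).
  by rewrite src_cedge hbx -fn_src hsrc.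
by rewrite fn_cedge hx; move: (ha (e i)) => /= ->; rewrite hge.
Qed.

End OverLocalIsometry.

Definition coequalizes (A B : CubeCx) (phi : cmap A B) n (x1 x2 : cell A n) : Prop :=
  forall (W : CubeCx) (psi : cmap A W), fn psi x1 = fn psi x2 ->
    exists u : cmap B W, ceq (ccomp u phi) psi /\
      forall u' : cmap B W, ceq (ccomp u' phi) psi -> ceq u' u.

Definition attaches (A B : CubeCx) (phi : cmap A B) n (e : 'I_n -> cell A 1)
    (d : cell B n) : Prop :=
  forall (W : CubeCx) (psi : cmap A W) (w : cell W n),
    (forall i, act (cedge i) w = fn psi (e i)) ->
    exists u : cmap B W, (ceq (ccomp u phi) psi /\ fn u d = w) /\
      forall u' : cmap B W, ceq (ccomp u' phi) psi -> fn u' d = w -> ceq u' u.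

Lemma coequalizes_uniq (A B W : CubeCx) (phi : cmap A B) n (x1 x2 : cell A n)
    (psi : cmap A W) (u1 u2 : cmap B W) :
  coequalizes phi x1 x2 -> fn psi x1 = fn psi x2 ->
  ceq (ccomp u1 phi) psi -> ceq (ccomp u2 phi) psi -> ceq u1 u2.
Proof.
move=> U hpsi h1 h2; have [u [_ uniq]] := U W psi hpsi.
exact: ceq_trans (uniq u1 h1) (ceq_sym (uniq u2 h2)).
Qed.

Lemma attaches_uniq (A B W : CubeCx) (phi : cmap A B) n (e : 'I_n -> cell A 1)
    (d : cell B n) (psi : cmap A W) (w : cell W n) (u1 u2 : cmap B W) :
  attaches phi e d -> (forall i, act (cedge i) w = fn psi (e i)) ->
  ceq (ccomp u1 phi) psi -> fn u1 d = w ->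
  ceq (ccomp u2 phi) psi -> fn u2 d = w -> ceq u1 u2.
Proof.
move=> U hw h1 h1d h2 h2d; have [u [_ uniq]] := U W psi w hw.
exact: ceq_trans (uniq u1 h1 h1d) (ceq_sym (uniq u2 h2 h2d)).
Qed.

Lemma coequalizes_epi (A B W : CubeCx) (phi : cmap A B) n (x1 x2 : cell A n)
    (u1 u2 : cmap B W) :
  coequalizes phi x1 x2 -> fn phi x1 = fn phi x2 ->
  ceq (ccomp u1 phi) (ccomp u2 phi) -> ceq u1 u2.
Proof.
move=> U hphi h; apply: (coequalizes_uniq (psi := ccomp u2 phi) U) => //=.
by rewrite hphi.
Qed.

Lemma attaches_epi (Y W A B : CubeCx) (gW : cmap W Y) (phi : cmap A B) n
    (e : 'I_n.+1 -> cell A 1) (d : cell B n.+1) (u1 u2 : cmap B W) :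
  local_isometry gW -> (forall i, act (cedge i) d = fn phi (e i)) ->
  attaches phi e d -> ceq (ccomp u1 phi) (ccomp u2 phi) ->
  ceq (ccomp gW u1) (ccomp gW u2) -> ceq u1 u2.
Proof.
move=> [inj _] hde U h hg.
have hd : fn u1 d = fn u2 d.
  apply: inj; last exact: hg.
  by rewrite -!fn_base -(src_cedge d ord0) hde -fn_src; apply: h.
apply: (attaches_uniq (psi := ccomp u2 phi) (w := fn u2 d) U) => //.
by move=> i; rewrite -fn_cedge hde.
Qed.

Section Moves.

Variables (Y W A B : CubeCx) (gW : cmap W Y) (gA : cmap A Y) (gB : cmap B Y)
  (phi : cmap A B).
Hypothesis hover : ceq gA (ccomp gB phi).

Lemma iso_extends (a : cmap A W) :
  is_iso phi -> ceq (ccomp gW a) gA ->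
  exists b : cmap B W, ceq (ccomp b phi) a /\ ceq (ccomp gW b) gB.
Proof.
move=> [k [hkphi hphik]] ha; exists (ccomp a k); split=> n y /=.
  by move: (hkphi n y) => /= ->.
by move: (ha _ (fn k y)) (hover (fn k y)) (hphik n y) => /= -> -> ->.
Qed.

Lemma coequalizes_extends n (x1 x2 : cell A n) (a : cmap A W) :
  coequalizes phi x1 x2 -> fn gA x1 = fn gA x2 ->
  ceq (ccomp gW a) gA -> fn a x1 = fn a x2 ->
  exists b : cmap B W, ceq (ccomp b phi) a /\ ceq (ccomp gW b) gB.
Proof.
move=> U hg ha hx; have [b [hb _]] := U W a hx.
exists b; split=> //; apply: (coequalizes_uniq (psi := gA) U hg).
  exact: ceq_trans (ceq_ccompr gW hb) ha.
exact: ceq_sym.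
Qed.

Lemma attaches_extends n (v : cell A 0) (e : 'I_n.+1 -> cell A 1)
    (c : cell Y n.+1) (d : cell B n.+1) (a : cmap A W) :
  local_isometry gW -> (forall i, src (e i) = v) ->
  (forall i, fn gA (e i) = act (cedge i) c) -> fn gB d = c ->
  attaches phi e d -> ceq (ccomp gW a) gA ->
  exists b : cmap B W, ceq (ccomp b phi) a /\ ceq (ccomp gW b) gB.
Proof.
move=> hli hsrc hge hgd U ha.
have hbc : base c = fn gA v by rewrite -(src_cedge c ord0) -hge -fn_src hsrc.
have [x [_ hx hxe]] := over_local_isometry_lift hli ha hsrc hge hbc.
have [b [[hb hbd] _]] := U W a x hxe.
exists b; split=> //.
apply: (attaches_uniq (psi := gA) (w := c) U) => //.
  exact: ceq_trans (ceq_ccompr gW hb) ha.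
by rewrite /= hbd.
Qed.

Lemma iso_epi (u1 u2 : cmap B W) :
  is_iso phi -> ceq (ccomp u1 phi) (ccomp u2 phi) -> ceq u1 u2.
Proof.
move=> [k [_ hphik]] h n y.
by move: (hphik n y) (h n (fn k y)) => /= ->.
Qed.

End Moves.

Lemma step_extends (Y W A B : CubeCx) (gW : cmap W Y) (gA : cmap A Y)
    (gB : cmap B Y) (phi : cmap A B) (a : cmap A W) :
  npc Y -> local_isometry gW -> is_step gA gB phi -> ceq (ccomp gW a) gA ->
  exists b : cmap B W, ceq (ccomp b phi) a /\ ceq (ccomp gW b) gB.
Proof.
move=> [cell_eq _] hli [hover hmove] ha.
case: hmove => [hiso | [fold | [ident | attach]]].
- exact: (iso_extends hover hiso ha).
- have [e1 [e2 [_ [hs [hg [_ U]]]]]] := fold.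
  exact: coequalizes_extends U hg ha (over_local_isometry_inj hli ha hs hg).
- have [n [c1 [c2 [_ [hskel [_ U]]]]]] := ident.
  have hb : base c1 = base c2 by apply: hskel; [|exact: is_face_vert0].
  have hg : fn gA c1 = fn gA c2.
    apply: cell_eq; first by rewrite -!fn_base hb.
    by move=> i; rewrite -!fn_cedge hskel //; exact: is_face_cedge.
  exact: coequalizes_extends U hg ha (over_local_isometry_inj hli ha hb hg).
- have [n [v [e [c [d [hsrc [_ [hge [_ [hgd U]]]]]]]]]] := attach.
  exact: attaches_extends hli hsrc hge hgd U ha.
Qed.

Lemma step_epi (Y W A B : CubeCx) (gW : cmap W Y) (gA : cmap A Y)
    (gB : cmap B Y) (phi : cmap A B) (u1 u2 : cmap B W) :
  local_isometry gW -> is_step gA gB phi ->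
  ceq (ccomp u1 phi) (ccomp u2 phi) -> ceq (ccomp gW u1) (ccomp gW u2) ->
  ceq u1 u2.
Proof.
move=> hli [_ hmove] h hg.
case: hmove => [hiso | [fold | [ident | attach]]].
- exact: iso_epi hiso h.
- have [e1 [e2 [_ [_ [_ [hp U]]]]]] := fold; exact: coequalizes_epi U hp h.
- have [n [c1 [c2 [_ [_ [hp U]]]]]] := ident; exact: coequalizes_epi U hp h.
- have [n [v [e [c [d [_ [_ [_ [hde [_ U]]]]]]]]]] := attach.
  exact: attaches_epi hli hde U h hg.
Qed.

Definition is_cocone (Xs : nat -> CubeCx) (phi : forall i, cmap (Xs i) (Xs i.+1))
    (W : CubeCx) (k : forall i, cmap (Xs i) W) : Prop :=
  forall i, ceq (ccomp (k i.+1) (phi i)) (k i).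

Definition is_direct_limit (Xs : nat -> CubeCx)
    (phi : forall i, cmap (Xs i) (Xs i.+1)) (Z : CubeCx)
    (j : forall i, cmap (Xs i) Z) : Prop :=
  forall (W : CubeCx) (k : forall i, cmap (Xs i) W), is_cocone phi k ->
    exists u : cmap Z W, (forall i, ceq (ccomp u (j i)) (k i)) /\
      forall u' : cmap Z W, (forall i, ceq (ccomp u' (j i)) (k i)) -> ceq u' u.

Lemma direct_limit_epi (Xs : nat -> CubeCx) (phi : forall i, cmap (Xs i) (Xs i.+1))
    (Z W : CubeCx) (j : forall i, cmap (Xs i) Z) (u1 u2 : cmap Z W) :
  is_direct_limit phi j -> is_cocone phi j ->
  (forall i, ceq (ccomp u1 (j i)) (ccomp u2 (j i))) -> ceq u1 u2.
Proof.
move=> lim coc h.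
have [u [_ uniq]] := lim W (fun i => ccomp u2 (j i)) (fun i => ceq_ccompr u2 (coc i)).
exact: ceq_trans (uniq u1 h) (ceq_sym (uniq u2 (fun i n x => erefl))).
Qed.

Lemma dependent_choice (T : nat -> Type) (R : forall i, T i -> T i.+1 -> Prop) :
  (forall i (x : T i), exists y, R i x y) ->
  forall x0 : T 0, exists k : forall i, T i, k 0 = x0 /\ forall i, R i (k i) (k i.+1).
Proof.
move=> total x0.
pose next i (x : T i) := constructive_indefinite_description _ (total i x).
exists (fix k i := if i is i'.+1 then proj1_sig (next i' (k i')) else x0).
by split=> // i; apply: proj2_sig.
Qed.

Section Completion.

Variables (X Y Z : CubeCx) (f : cmap X Y) (iota : cmap X Z) (g : cmap Z Y).
Hypothesis hc : is_completion f iota g.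

Lemma completion_over : ceq (ccomp g iota) f.
Proof.
have [Xs [phi [gs [psi0 [j [[hf _] [_ [_ [_ [hiota [hg _]]]]]]]]]]] := hc.
move=> n x /=; rewrite hiota /=.
by move: (hg 0 n (fn psi0 x)) => /= ->; rewrite hf.
Qed.

Lemma completion_local_isometry : local_isometry g.
Proof. by have [Xs [phi [gs [psi0 [j [_ [_ [_ [_ [_ [_ li]]]]]]]]]]] := hc. Qed.

Lemma completion_extends (W : CubeCx) (gW : cmap W Y) (a : cmap X W) :
  npc Y -> local_isometry gW -> ceq (ccomp gW a) f ->
  exists u : cmap Z W, ceq (ccomp u iota) a /\ ceq (ccomp gW u) g.
Proof.
move=> hn hli ha.
have [Xs [phi [gs [psi0 [j [s0 [ss [coc [lim [hiota [hg _]]]]]]]]]]] := hc.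
have [a0 [ha0 hga0]] := step_extends hn hli s0 ha.
pose T i := {b : cmap (Xs i) W | ceq (ccomp gW b) (gs i)}.
have [k [k0 kS]] : exists k : forall i, T i,
    k 0 = exist _ a0 hga0 /\ is_cocone phi (fun i => sval (k i)).
  apply: (@dependent_choice T (fun i b b' => ceq (ccomp (sval b') (phi i)) (sval b))).
  move=> i [b hb]; have [b' [hb' hgb']] := step_extends hn hli (ss i) hb.
  by exists (exist _ b' hgb').
have [u [hu _]] := lim W (fun i => sval (k i)) kS.
exists u; split.
  apply: ceq_trans (ceq_ccompr u hiota) (ceq_trans (ceq_ccompl psi0 (hu 0)) _).
  by rewrite k0.
apply: (direct_limit_epi lim coc) => i.
exact: ceq_trans (ceq_ccompr gW (hu i)) (ceq_trans (svalP (k i)) (ceq_sym (hg i))).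
Qed.

Lemma completion_epi (W : CubeCx) (gW : cmap W Y) (v1 v2 : cmap Z W) :
  local_isometry gW -> ceq (ccomp v1 iota) (ccomp v2 iota) ->
  ceq (ccomp gW v1) (ccomp gW v2) -> ceq v1 v2.
Proof.
move=> hli h hg.
have [Xs [phi [gs [psi0 [j [s0 [ss [coc [lim [hiota _]]]]]]]]]] := hc.
apply: (direct_limit_epi lim coc); elim=> [|i IH].
  apply: (step_epi hli s0); last by move=> n x; exact: (hg n (fn (j 0) x)).
  exact: ceq_trans (ceq_sym (ceq_ccompr v1 hiota)) (ceq_trans h (ceq_ccompr v2 hiota)).
apply: (step_epi hli (ss i)); last by move=> n x; exact: (hg n (fn (j i.+1) x)).
exact: ceq_trans (ceq_ccompr v1 (coc i))
  (ceq_trans IH (ceq_sym (ceq_ccompr v2 (coc i)))).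
Qed.

Lemma completion_endo_id (v : cmap Z Z) :
  ceq (ccomp v iota) iota -> ceq (ccomp g v) g -> ceq v (cid Z).
Proof. exact: (completion_epi (v2 := cid Z) completion_local_isometry). Qed.

End Completion.

Theorem theorem4p2 (X Y : CubeCx) (p : cell X 0) (q : cell Y 0)
    (f : cmap X Y) :
  fn f p = q -> compact Y -> npc Y -> connected X ->
  forall (Z : CubeCx) (iota : cmap X Z) (g : cmap Z Y)
         (Z' : CubeCx) (iota' : cmap X Z') (g' : cmap Z' Y),
    is_completion f iota g -> is_completion f iota' g' ->
    exists h : cmap Z Z',
      is_iso h /\ ceq (ccomp h iota) iota' /\ ceq (ccomp g' h) g.
Proof.
move=> _ _ hn _ Z iota g Z' iota' g' hc hc'.
have [u [hu hgu]] := completion_extends hc hn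
  (completion_local_isometry hc') (completion_over hc').
have [u' [hu' hgu']] := completion_extends hc' hn
  (completion_local_isometry hc) (completion_over hc).
exists u; split=> //; exists u'; split.
- exact: (completion_endo_id hc (v := ccomp u' u)
    (ceq_trans (ceq_ccompr u' hu) hu') (ceq_trans (ceq_ccompl u hgu') hgu)).
- exact: (completion_endo_id hc' (v := ccomp u u')
    (ceq_trans (ceq_ccompr u hu') hu) (ceq_trans (ceq_ccompl u' hgu) hgu')).
Qed.
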